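(* Let $\mathbf{A}=\langle A;\oplus,-,{}^{+},{}^{-},0,1\rangle$ be a quasi-MV* algebra. For $x,y\in A$ define $x\to y:=-x\oplus y$ and $\neg x:=-x$. Then $f(\mathbf{A})=\langle A;\to,\neg,{}^{+},{}^{-},1\rangle$ (with ${}^+,{}^-,1$ those of $\mathbf{A}$) is a quasi-Wajsberg* algebra, where in $f(\mathbf{A})$ the join is $x\vee y=((x^{+}\to y^{+})^{+}\to(\neg x)^{-})\to((y^{-}\to x^{-})^{-}\to x^{-})$.
   Context: A quasi-MV* algebra is an algebra $\langle A;\oplus,-,{}^{+},{}^{-},0,1\rangle$ of type $\langle2,1,1,1,0,0\rangle$ such that for all $x,y,z\in A$: (QMV*1) $x\oplus y=y\oplus x$; (QMV*2) $(1\oplus x)\oplus(y\oplus(1\oplus z))=((1\oplus x)\oplus y)\oplus(1\oplus z)$; (QMV*3) $(x\oplus 1)\oplus 1=1$; (QMV*4) $(x\oplus y)\oplus 0=x\oplus y$; (QMV*5) $x^{+}\oplus 0=(x\oplus 0)^{+}=1\oplus(-1\oplus x)$ and $x^{-}\oplus 0=(x\oplus 0)^{-}=-1\oplus(1\oplus x)$; (QMV*6) $x\oplus y=(x^{+}\oplus y^{+})\oplus(x^{-}\oplus y^{-})$; (QMV*7) $0=-0$; (QMV*8) $x\oplus(-x)=0$; (QMV*9) $-(x\oplus y)=-x\oplus(-y)$; (QMV*10) $-(-x)=x$; (QMV*11) $(-x\oplus(x\oplus y))^{+}=-x^{+}\oplus(x^{+}\oplus y^{+})$; (QMV*12) $x\vee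 y=y\vee x$; (QMV*13) $x\vee(y\vee z)=(x\vee y)\vee z$; (QMV*14) $x\oplus(y\vee z)=(x\oplus y)\vee(x\oplus z)$; where $x\vee y:=(x^{+}\oplus(-x^{+}\oplus y^{+})^{+})\oplus(x^{-}\oplus(-x^{-}\oplus y^{-})^{+})$, and ${}^+,{}^-$ bind tighter than $-$. A quasi-Wajsberg* algebra is an algebra $\langle W;\to,\neg,{}^{+},{}^{-},1\rangle$ of type $\langle2,1,1,1,0\rangle$ such that for all $x,y,z\in W$: (QW*1) $x\to y=\neg y\to\neg x$; (QW*2) $(x\to 1)\to((y\to 1)\to z)=(y\to 1)\to((x\to 1)\to z)$; (QW*3) $(1\to x)\to 1=1$; (QW*4) $(z\to z)\to(x\to y)=x\to y$; (QW*5) $(1\to 1)\to x^{+}=((1\to 1)\to x)^{+}=(x\to 1)\to 1$ and $(1\to 1)\to x^{-}=((1\to 1)\to x)^{-}=(x\to\neg 1)\to\neg 1$; (QW*6) $x\to y=(y^{+}\to x^{-})\to(x^{+}\to y^{-})$; (QW*7) $\neg(x\to y)=y\to x$; (QW*8) $\neg\neg x=x$; (QW*9) $(x\to(\neg x\to y))^{+}=x^{+}\to(\neg x^{+}\to y^{+})$; (QW*10) $x\vee y=y\vee x$; (QW*11) $x\vee(y\vee z)=(x\vee y)\vee z$; (QW*12) $x\to(y\vee z)=(x\to y)\vee(x\to z)$; where $x\vee y:=((x^{+}\to y^{+})^{+}\to(\neg x)^{-})\to((y^{-}\to x^{-})^{-}\to x^{-})$. Conventions: ${}^+,{}^-$ bind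 tighter than $\neg$, which binds tighter than $\to$. *)

Section QMV.
Variables (A : Type) (oplus : A -> A -> A) (neg : A -> A)
  (pl mi : A -> A) (zero one : A).

Definition qmv_join (x y : A) : A :=
  oplus (oplus (pl x) (pl (oplus (neg (pl x)) (pl y))))
        (oplus (mi x) (pl (oplus (neg (mi x)) (mi y)))).

Definition is_quasi_MVstar : Prop :=
  (forall x y, oplus x y = oplus y x) /\
  (forall x y z, oplus (oplus one x) (oplus y (oplus one z))
                 = oplus (oplus (oplus one x) y) (oplus one z)) /\
  (forall x, oplus (oplus x one) one = one) /\
  (forall x y, oplus (oplus x y) zero = oplus x y) /\
  (forall x, oplus (pl x) zero = pl (oplus x zero) /\
             pl (oplus x zero) = oplus one (oplus (neg one) x)) /\
  (forall x, oplus (mi x) zero = mi (oplus x zero) /\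
             mi (oplus x zero) = oplus (neg one) (oplus one x)) /\
  (forall x y, oplus x y = oplus (oplus (pl x) (pl y)) (oplus (mi x) (mi y))) /\
  zero = neg zero /\
  (forall x, oplus x (neg x) = zero) /\
  (forall x y, neg (oplus x y) = oplus (neg x) (neg y)) /\
  (forall x, neg (neg x) = x) /\
  (forall x y, pl (oplus (neg x) (oplus x y))
               = oplus (neg (pl x)) (oplus (pl x) (pl y))) /\
  (forall x y, qmv_join x y = qmv_join y x) /\
  (forall x y z, qmv_join x (qmv_join y z) = qmv_join (qmv_join x y) z) /\
  (forall x y z, oplus x (qmv_join y z) = qmv_join (oplus x y) (oplus x z)).
End QMV.

Section QW.
Variables (W : Type) (imp : W -> W -> W) (lneg : W -> W)
  (pl mi : W -> W) (one : W).

Definition qw_join (x y : W) : W :=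
  imp (imp (pl (imp (pl x) (pl y))) (mi (lneg x)))
      (imp (mi (imp (mi y) (mi x))) (mi x)).

Definition is_quasi_Wstar : Prop :=
  (forall x y, imp x y = imp (lneg y) (lneg x)) /\
  (forall x y z, imp (imp x one) (imp (imp y one) z)
                 = imp (imp y one) (imp (imp x one) z)) /\
  (forall x, imp (imp one x) one = one) /\
  (forall x y z, imp (imp z z) (imp x y) = imp x y) /\
  (forall x, imp (imp one one) (pl x) = pl (imp (imp one one) x) /\
             pl (imp (imp one one) x) = imp (imp x one) one) /\
  (forall x, imp (imp one one) (mi x) = mi (imp (imp one one) x) /\
             mi (imp (imp one one) x) = imp (imp x (lneg one)) (lneg one)) /\
  (forall x y, imp x y = imp (imp (pl y) (mi x)) (imp (pl x) (mi y))) /\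
  (forall x y, lneg (imp x y) = imp y x) /\
  (forall x, lneg (lneg x) = x) /\
  (forall x y, pl (imp x (imp (lneg x) y))
               = imp (pl x) (imp (lneg (pl x)) (pl y))) /\
  (forall x y, qw_join x y = qw_join y x) /\
  (forall x y z, qw_join x (qw_join y z) = qw_join (qw_join x y) z) /\
  (forall x y z, imp x (qw_join y z) = qw_join (imp x y) (imp x z)).
End QW.

Definition f_imp {A : Type} (oplus : A -> A -> A) (neg : A -> A) (x y : A) : A :=
  oplus (neg x) y.
Arguments qmv_join {A} oplus neg pl mi x y.
Arguments is_quasi_MVstar {A} oplus neg pl mi zero one.
Arguments qw_join {W} imp lneg pl mi x y.
Arguments is_quasi_Wstar {W} imp lneg pl mi one.

(* The translation x -> y := -x (+) y, ~x := -x preserves the operations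
   ^+, ^-, 1 and turns every quasi-Wajsberg* axiom into an instance of a
   quasi-MV* axiom, up to commutativity, the involution -, and the
   congruence "u (+) 0 = v (+) 0 implies x (+) u = x (+) v".  That
   congruence is the one non-evident ingredient: it comes from the
   idempotence y \/ y = y (+) 0 of the join together with distributivity
   (QMV*14).  With it, -(x^-) may be replaced by (-x)^+ inside a sum, which
   is what translates QMV*6 into QW*6 and the join of f(A) into that of A. *)

From Corelib Require Import ssreflect ssrfun.

Section QuasiMVstarToQuasiWstar.

Variables (A : Type) (oplus : A -> A -> A) (neg : A -> A)
  (pl mi : A -> A) (zero one : A).

Local Infix "⊕" := oplus (at level 50, left associativity).
Local Notation join := (qmv_join oplus neg pl mi).
Local Notation imp := (f_imp oplus neg).

Hypothesis oplusC : forall x y, x ⊕ y = y ⊕ x.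
Hypothesis oplus_one_assoc : forall x y z,
  (one ⊕ x) ⊕ (y ⊕ (one ⊕ z)) = ((one ⊕ x) ⊕ y) ⊕ (one ⊕ z).
Hypothesis oplus_one_one : forall x, (x ⊕ one) ⊕ one = one.
Hypothesis sum_oplus0 : forall x y, (x ⊕ y) ⊕ zero = x ⊕ y.
Hypothesis pl_oplus0 : forall x,
  pl x ⊕ zero = pl (x ⊕ zero) /\ pl (x ⊕ zero) = one ⊕ (neg one ⊕ x).
Hypothesis mi_oplus0 : forall x,
  mi x ⊕ zero = mi (x ⊕ zero) /\ mi (x ⊕ zero) = neg one ⊕ (one ⊕ x).
Hypothesis oplus_pl_mi : forall x y,
  x ⊕ y = (pl x ⊕ pl y) ⊕ (mi x ⊕ mi y).
Hypothesis neg0 : zero = neg zero.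
Hypothesis oplusN : forall x, x ⊕ neg x = zero.
Hypothesis negD : forall x y, neg (x ⊕ y) = neg x ⊕ neg y.
Hypothesis negK : involutive neg.
Hypothesis pl_oplusNK : forall x y,
  pl (neg x ⊕ (x ⊕ y)) = neg (pl x) ⊕ (pl x ⊕ pl y).
Hypothesis joinC : forall x y, join x y = join y x.
Hypothesis joinA : forall x y z, join x (join y z) = join (join x y) z.
Hypothesis oplus_joinDr : forall x y z, x ⊕ join y z = join (x ⊕ y) (x ⊕ z).

Lemma neg_inj : injective neg.
Proof. exact: inv_inj. Qed.

Lemma oplusNl x : neg x ⊕ x = zero.
Proof. by rewrite oplusC oplusN. Qed.

Lemma oplus00 : zero ⊕ zero = zero.
Proof. by rewrite {2}neg0 oplusN. Qed.

Lemma one_oplus0 : one ⊕ zero = one.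
Proof. by rewrite -{1}(oplus_one_one one) sum_oplus0 oplus_one_one. Qed.

Lemma neg_one_oplus0 : neg one ⊕ zero = neg one.
Proof. by rewrite neg0 -negD one_oplus0. Qed.

Lemma pl0 : pl zero = zero.
Proof.
by rewrite -{1}oplus00 (proj2 (pl_oplus0 zero)) neg_one_oplus0 oplusN.
Qed.

Lemma mi0 : mi zero = zero.
Proof.
by rewrite -{1}oplus00 (proj2 (mi_oplus0 zero)) one_oplus0 oplusNl.
Qed.

Lemma joinxx x : join x x = x ⊕ zero.
Proof.
by rewrite /qmv_join !oplusNl pl0 (oplus_pl_mi x zero) pl0 mi0.
Qed.

Lemma oplus_addr0 x y : x ⊕ (y ⊕ zero) = x ⊕ y.
Proof. by rewrite -joinxx oplus_joinDr joinxx sum_oplus0. Qed.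

Lemma oplus_congr x {u v} : u ⊕ zero = v ⊕ zero -> x ⊕ u = x ⊕ v.
Proof. by move=> Euv; rewrite -oplus_addr0 Euv oplus_addr0. Qed.

Lemma oplus_congl x {u v} : u ⊕ zero = v ⊕ zero -> u ⊕ x = v ⊕ x.
Proof. by move=> Euv; rewrite oplusC (oplusC v); apply: oplus_congr. Qed.

Lemma neg_mi x : neg (mi x) ⊕ zero = pl (neg x) ⊕ zero.
Proof.
case: (mi_oplus0 x) => mi_x0 mi_xE; case: (pl_oplus0 (neg x)) => -> ->.
by rewrite {1}neg0 -negD mi_x0 mi_xE !negD !negK.
Qed.

Lemma neg_pl x : neg (pl x) ⊕ zero = mi (neg x) ⊕ zero.
Proof.
case: (pl_oplus0 x) => pl_x0 pl_xE; case: (mi_oplus0 (neg x)) => -> ->.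
by rewrite {1}neg0 -negD pl_x0 pl_xE !negD !negK.
Qed.

Lemma oplus_oneCA x y z :
  (one ⊕ x) ⊕ ((one ⊕ y) ⊕ z) = (one ⊕ y) ⊕ ((one ⊕ x) ⊕ z).
Proof. by rewrite (oplusC (one ⊕ y)) oplus_one_assoc oplusC. Qed.

Lemma imp_one_one : imp one one = zero.
Proof. exact: oplusNl. Qed.

Lemma neg_imp x y : neg (imp x y) = x ⊕ neg y.
Proof. by rewrite /f_imp negD negK. Qed.

Lemma imp_contra x y : imp x y = imp (neg y) (neg x).
Proof. by rewrite /f_imp negK oplusC. Qed.

Lemma imp_to_one_comm x y z :
  imp (imp x one) (imp (imp y one) z) = imp (imp y one) (imp (imp x one) z).
Proof.
apply: neg_inj; rewrite /f_imp !negD !negK (oplusC (neg x)) (oplusC (neg y)).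
exact: oplus_oneCA.
Qed.

Lemma imp_one_l_one x : imp (imp one x) one = one.
Proof. by rewrite {1}/f_imp neg_imp (oplusC one) oplus_one_one. Qed.

Lemma imp_xx_l x y z : imp (imp z z) (imp x y) = imp x y.
Proof. by rewrite {1}/f_imp neg_imp oplusN oplusC sum_oplus0. Qed.

Lemma imp0 x : imp zero x = x ⊕ zero.
Proof. by rewrite /f_imp -neg0 oplusC. Qed.

Lemma pl_imp x :
  imp (imp one one) (pl x) = pl (imp (imp one one) x) /\
  pl (imp (imp one one) x) = imp (imp x one) one.
Proof.
rewrite imp_one_one !imp0; case: (pl_oplus0 x) => -> ->; split=> //.
by rewrite /f_imp negD negK oplusC (oplusC x).
Qed.

Lemma mi_imp x :
  imp (imp one one) (mi x) = mi (imp (imp one one) x) /\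
  mi (imp (imp one one) x) = imp (imp x (neg one)) (neg one).
Proof.
rewrite imp_one_one !imp0; case: (mi_oplus0 x) => -> ->; split=> //.
by rewrite /f_imp negD !negK oplusC (oplusC x).
Qed.

Lemma imp_pl_mi x y :
  imp x y = imp (imp (pl y) (mi x)) (imp (pl x) (mi y)).
Proof.
rewrite {2}/f_imp neg_imp {1}/f_imp oplus_pl_mi.
rewrite (oplus_congr (pl y) (neg_mi x)) (oplusC (pl y)).
by rewrite /f_imp (oplus_congl (mi y) (neg_pl x)).
Qed.

Lemma neg_imp_swap x y : neg (imp x y) = imp y x.
Proof. by rewrite neg_imp oplusC. Qed.

Lemma pl_imp_neg x y :
  pl (imp x (imp (neg x) y)) = imp (pl x) (imp (neg (pl x)) (pl y)).
Proof. by rewrite /f_imp !negK pl_oplusNK. Qed.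

Lemma qw_join_f_imp x y : qw_join imp neg pl mi x y = join x y.
Proof.
rewrite /qw_join /qmv_join {1}/f_imp neg_imp.
rewrite (oplus_congr _ (neg_mi (neg x))) negK.
rewrite {2}/f_imp (oplus_congl (mi x) (neg_mi (imp (mi y) (mi x)))).
by rewrite neg_imp_swap /f_imp (oplusC _ (pl x)) (oplusC _ (mi x)).
Qed.

Lemma quasi_Wstar_f_imp : is_quasi_Wstar imp neg pl mi one.
Proof.
split; first exact: imp_contra.
split; first exact: imp_to_one_comm.
split; first exact: imp_one_l_one.
split; first exact: imp_xx_l.
split; first exact: pl_imp.
split; first exact: mi_imp.
split; first exact: imp_pl_mi.
split; first exact: neg_imp_swap.
split; first exact: negK.
split; first exact: pl_imp_neg.
split; first by move=> x y; rewrite !qw_join_f_imp; apply: joinC.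
split; first by move=> x y z; rewrite !qw_join_f_imp; apply: joinA.
by move=> x y z; rewrite !qw_join_f_imp; apply: oplus_joinDr.
Qed.

End QuasiMVstarToQuasiWstar.

Theorem proposition3p6 (A : Type) (oplus : A -> A -> A) (neg : A -> A)
  (pl mi : A -> A) (zero one : A) :
  is_quasi_MVstar oplus neg pl mi zero one ->
  is_quasi_Wstar (f_imp oplus neg) neg pl mi one.
Proof.
move=> [? [? [? [? [? [? [? [? [? [? [? [? [? [? ?]]]]]]]]]]]]]].
by apply: quasi_Wstar_f_imp.
Qed.
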